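(* Let $m\ge1$ be an integer. For real $H>1$ let $\mathcal P_m(H)$ be the set of monic self-reciprocal polynomials $P\in\mathbb Z[t]$ of degree $2(m+1)$ having $2m$ roots on the complex unit circle and two positive real roots $\alpha,\alpha^{-1}$ with $1<\alpha\le H$, and let $\mathcal P^R_m(H)$ be the set of reducible (over $\mathbb Q$) polynomials in $\mathcal P_m(H)$. Then there is $C_2>0$ depending only on $m$ such that \[ \#\mathcal P^R_m(H)\le C_2\,H^{m}\quad\text{for all } H>1 . \]
   Context: A polynomial $P$ of degree $n$ is self-reciprocal if $P(t)=t^nP(t^{-1})$. *)

From HB Require Import structures.
From mathcomp Require Import all_boot all_order all_algebra.
From mathcomp Require Import complex.
From mathcomp Require Import reals.
Set Implicit Arguments. Unset Strict Implicit. Unset Printing Implicit Defensive.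
Import Order.TTheory GRing.Theory Num.Theory.
Local Open Scope ring_scope.
Local Open Scope complex_scope.

Definition polyC_of (R : realType) (P : {poly int}) : {poly R[i]} :=
  map_poly (fun z : int => z%:~R) P.

Definition self_reciprocal (R : realType) (P : {poly int}) : Prop :=
  forall t : R[i], t != 0 ->
    (polyC_of R P).[t] = t ^+ (size P).-1 * (polyC_of R P).[t^-1].

Definition in_Pm (R : realType) (m : nat) (H : R) (P : {poly int}) : Prop :=
  [/\ P \is monic,
      (size P).-1 = (2 * (m + 1))%N,
      self_reciprocal R P &
      exists (s : seq R[i]) (alpha : R),
        [/\ polyC_of R P = \prod_(z <- s) ('X - z%:P),
            count (fun z : R[i] => `|z| == 1) s = (2 * m)%N,
            alpha%:C \in s, (alpha^-1)%:C \in s &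
            1 < alpha <= H]].

Definition in_PRm (R : realType) (m : nat) (H : R) (P : {poly int}) : Prop :=
  in_Pm m H P /\ ~ irreducible_poly (map_poly (fun z : int => z%:~R) P : {poly rat}).

From HB Require Import structures.
From mathcomp Require Import all_boot all_order all_algebra.
From mathcomp Require Import complex.
From mathcomp Require Import reals.
From mathcomp Require Import zify ring lra.
From mathcomp Require boolp.
Import Order.TTheory GRing.Theory Num.Theory.
Set Implicit Arguments. Unset Strict Implicit. Unset Printing Implicit Defensive.
Local Open Scope ring_scope.

(* By Gauss's lemma a reducible P in P_m(H) is a product Q G of monic integer
   polynomials of positive degree, Q being the factor with the root alpha.  The
   moduli of all roots of P multiply to alpha * alpha^-1 = 1, and so do those of
   Q, since |Q(0)| |G(0)| = 1 in the integers; hence alpha^-1 is a root of Q too,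
   and every root of G lies on the unit circle.  This bounds the coefficients of
   G by 2^(2m+2) and those of Q by (1 + alpha)(1 + alpha^-1) 4^m <= 4^(m+1) H.
   On the unit circle 1/z is the complex conjugate of z, so the roots of Q are
   closed under inversion: Q is self-reciprocal up to the sign Q(0) and is thus
   determined by its degree, Q(0) and Q_1, ..., Q_m.  These data take O(H^m)
   values. *)

Lemma perm_eq_filter_exceptions (T : eqType) (p : pred T) (l s : seq T) :
    uniq l -> all (predC p) l -> {subset l <= s} -> (count (predC p) s <= size l)%N ->
  perm_eq s (l ++ filter p s).
Proof.
move=> uniq_l notp_l sub_ls count_s.
have sub_l : {subset l <= filter (predC p) s}.
  by move=> x xl; rewrite mem_filter (allP notp_l) // sub_ls.
have size_f : (size (filter (predC p) s) <= size l)%N by rewrite size_filter.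
have uniq_f := leq_size_uniq uniq_l sub_l size_f.
have [_ eq_l] := uniq_min_size uniq_l sub_l size_f.
rewrite -(perm_filterC (predC p)).
have -> : filter (predC (predC p)) s = filter p s by apply: eq_filter => x /=; rewrite negbK.
by rewrite perm_cat2r uniq_perm.
Qed.

Lemma prodr_const_seq (R : pzSemiRingType) (I : Type) (l : seq I) (x : R) :
  \prod_(i <- l) x = x ^+ size l.
Proof. by rewrite big_const_seq count_predT iter_mulr_1. Qed.

Local Notation prod_XsubC l := (\prod_(z <- l) ('X - z%:P)).

Section FieldRoots.
Variable F : fieldType.

Lemma monic_factor_prod_XsubC (A B : {poly F}) (s : seq F) :
    A \is monic -> A * B = prod_XsubC s ->
  exists tA tB, [/\ perm_eq s (tA ++ tB), A = prod_XsubC tA & B = prod_XsubC tB].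
Proof.
move=> monA eAB.
have /dvdp_prod_XsubC [msk] : A %| prod_XsubC s by rewrite -eAB dvdp_mulr.
rewrite eqp_monic ?monic_prod_XsubC // => /eqP eA.
have [tB perm_s] := perm_to_subseq (mask_subseq msk s).
exists (mask msk s), tB; split => //.
apply: (mulfI (monic_neq0 monA)).
by rewrite eAB (perm_big _ perm_s) big_cat -eA.
Qed.

Lemma horner_prod_XsubC_inv (l : seq F) (t : F) :
    all (fun z => z != 0) l -> t != 0 ->
  t ^+ size l * (prod_XsubC l).[t^-1] =
    (prod_XsubC l).[0] * (prod_XsubC (map GRing.inv l)).[t].
Proof.
move=> /allP nz_l nz_t.
rewrite -prodr_const_seq big_map !horner_prod -!big_split /=.
apply: eq_big_seq => z /nz_l nz_z; rewrite !hornerXsubC.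
by rewrite sub0r mulNr !mulrBr !mulfV // opprB mulrC.
Qed.

End FieldRoots.

Definition reciprocal_up_to (R : nzRingType) (c : R) (p : {poly R}) : Prop :=
  forall i, (i <= (size p).-1)%N -> p`_((size p).-1 - i) = c * p`_i.

Lemma reciprocal_up_to_eq (R : nzRingType) m (c : R) (p q : {poly R}) :
    size p = size q -> (size p <= 2 * m + 2)%N ->
    reciprocal_up_to c p -> reciprocal_up_to c q ->
    (forall j, (j <= m)%N -> p`_j = q`_j) ->
  p = q.
Proof.
move=> size_pq size_p rec_p rec_q low_pq; apply/polyP => j.
have [le_jm | lt_mj] := leqP j m; first exact: low_pq.
have [le_jd | lt_dj] := leqP j (size p).-1; last first.
  by rewrite !nth_default // -?size_pq (leq_trans (leqSpred _) lt_dj).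
have -> : p`_j = c * p`_((size p).-1 - j) by rewrite -rec_p ?leq_subr // subKn.
have -> : q`_j = c * q`_((size p).-1 - j).
  by rewrite size_pq -rec_q ?leq_subr // subKn // -size_pq.
rewrite low_pq //; move: size_p lt_mj; set d := size p; clear; lia.
Qed.

Lemma eq_poly_on_nonzero (F : numDomainType) (p q : {poly F}) :
  (forall t, t != 0 -> p.[t] = q.[t]) -> p = q.
Proof.
move=> eq_pq; apply/eqP; rewrite -subr_eq0; apply: contraT => nz_pq.
pose rs := [seq i.+1%:R : F | i <- iota 0 (size (p - q))].
have := max_poly_roots nz_pq (rs := rs); rewrite size_map size_iota ltnn; apply.
  apply/allP => _ /mapP [i _ ->]; apply/rootP.
  by rewrite hornerD hornerN eq_pq ?subrr ?pnatr_eq0.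
by rewrite map_inj_uniq ?iota_uniq // => i j /eqP; rewrite eqr_nat => /eqP [].
Qed.

Section NumFieldRoots.
Variable F : numFieldType.

Lemma reciprocal_up_to_horner (c : F) (p : {poly F}) :
    (forall t, t != 0 -> t ^+ (size p).-1 * p.[t^-1] = c * p.[t]) ->
  reciprocal_up_to c p.
Proof.
set d := (size p).-1 => rev_p.
have size_p : (size p <= d.+1)%N by rewrite leqSpred.
have rev_coef : \poly_(i < d.+1) p`_(d - i) = c *: p.
  apply: eq_poly_on_nonzero => t nz_t.
  rewrite hornerZ horner_poly -rev_p // (horner_coef_wide _ size_p) mulr_sumr.
  rewrite (reindex_inj rev_ord_inj); apply: eq_bigr => /= i _.
  have le_id : (i <= d)%N by rewrite -ltnS.
  rewrite subSS subKn // (exprB le_id) ?unitfE // exprVn; ring.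
move=> i le_id; have /polyP/(_ i) := rev_coef.
by rewrite coef_poly ltnS le_id coefZ.
Qed.

Lemma reciprocal_prod_XsubC (l : seq F) :
    all (fun z => z != 0) l -> perm_eq (map GRing.inv l) l ->
  reciprocal_up_to (prod_XsubC l)`_0 (prod_XsubC l).
Proof.
move=> nz_l perm_inv; apply: reciprocal_up_to_horner => t nz_t.
rewrite size_prod_XsubC /= horner_prod_XsubC_inv // -horner_coef0.
by rewrite (perm_big _ perm_inv).
Qed.

Lemma norm_coef_prod_XsubC_le (l : seq F) j :
  `|(prod_XsubC l)`_j| <= \prod_(z <- l) (1 + `|z|).
Proof.
elim: l j => [|z l IH] j.
  by rewrite !big_nil coef1; case: (j == 0%N); rewrite ?normr1 ?normr0.
rewrite !big_cons mulrBl coefB coefXM coefCM.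
apply: le_trans (ler_normB _ _) _.
have prod_ge0 : 0 <= \prod_(x <- l) (1 + `|x|).
  by rewrite prodr_ge0 // => x _; rewrite addr_ge0.
rewrite normrM mulrDl mul1r lerD ?ler_wpM2l //.
by case: (j == 0%N); rewrite ?normr0.
Qed.

Lemma norm_coef0_prod_XsubC (l : seq F) : `|(prod_XsubC l)`_0| = \prod_(z <- l) `|z|.
Proof.
rewrite -horner_coef0 horner_prod normr_prod.
by apply: eq_bigr => z _; rewrite hornerXsubC sub0r normrN.
Qed.

End NumFieldRoots.

Section UnitCircle.
Variable R : rcfType.
Local Open Scope complex_scope.
Local Notation on_circle := (fun z : R[i] => `|z| == 1).

Lemma norm_real_complex (x : R) : 0 <= x -> `|x%:C| = x%:C.
Proof. by move=> x_ge0; rewrite ger0_norm // ler0c. Qed.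

Lemma real_complex_eq1 (x : R) : (x%:C == 1) = (x == 1).
Proof. by rewrite -(rmorph1 (real_complex R)) (inj_eq (@complexI R)). Qed.

Lemma count_off_circle0 (l : seq R[i]) : all on_circle l -> count (predC on_circle) l = 0%N.
Proof. by move=> all_l; apply/eqP; rewrite -leqn0 leqNgt -has_count has_predC all_l. Qed.

Lemma prod_norm_filter_on_circle (l : seq R[i]) :
  \prod_(z <- filter on_circle l) `|z| = 1.
Proof. by rewrite big_filter big_mkcond big1 // => z _; case: ifP => // /eqP. Qed.

Lemma prod_add1_norm_on_circle (l : seq R[i]) :
  all on_circle l -> \prod_(z <- l) (1 + `|z|) = 2 ^+ size l.
Proof.
move=> /allP circle_l; rewrite -prodr_const_seq.
by apply: eq_big_seq => z /circle_l /eqP ->.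
Qed.

Lemma norm_coef_on_circle_le (l : seq R[i]) j :
  all on_circle l -> `|(prod_XsubC l)`_j| <= 2 ^+ size l.
Proof.
move=> circle_l; rewrite -prod_add1_norm_on_circle //.
exact: norm_coef_prod_XsubC_le.
Qed.

Lemma perm_eq_conj_roots (l : seq R[i]) :
  map_poly conjc (prod_XsubC l) = prod_XsubC l -> perm_eq (map conjc l) l.
Proof. by move=> conj_l; apply: prod_XsubC_eq; rewrite prod_map_poly conj_l. Qed.

Lemma perm_eq_inv_roots (a : R) (l u : seq R[i]) :
    a != 0 -> perm_eq l [:: a%:C, a^-1%:C & u] -> all on_circle u ->
    perm_eq (map conjc l) l ->
  perm_eq (map GRing.inv l) l.
Proof.
move=> nz_a perm_l circle_u conj_l.
have inv_u : map GRing.inv u = map conjc u.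
  apply/eq_in_map => z /(allP circle_u) /eqP norm_z.
  by rewrite invc_norm norm_z expr1n invr1 mul1r.
apply: perm_trans (perm_map _ perm_l) _; rewrite /= inv_u fmorphV invrK -fmorphV.
apply: (perm_trans _ conj_l); rewrite perm_sym.
apply: (perm_trans (perm_map conjc perm_l)).
(* conjugation fixes the real roots a%:C and a^-1%:C *)
by apply/permP => p; rewrite /= !oppr0 addnCA.
Qed.

Section RealPair.
Variable alpha : R.
Hypothesis alpha_gt1 : 1 < alpha.
Local Notation a := alpha%:C.
Local Notation b := alpha^-1%:C.

Let alpha_gt0 : 0 < alpha. Proof. by apply: lt_trans alpha_gt1. Qed.
Let norm_a : `|a| = a. Proof. by rewrite norm_real_complex ?ltW. Qed.
Let norm_b : `|b| = b. Proof. by rewrite norm_real_complex // invr_ge0 ltW. Qed.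

Lemma real_pair_off_circle : ~~ on_circle a && ~~ on_circle b.
Proof.
rewrite /= norm_a norm_b !real_complex_eq1 gt_eqF //=.
by rewrite lt_eqF // invf_lt1.
Qed.

Lemma real_pair_neq : a != b.
Proof. by rewrite (inj_eq (@complexI R)) gt_eqF // (lt_trans _ alpha_gt1) // invf_lt1. Qed.

Lemma prod_norm_real_pair (u : seq R[i]) :
  all on_circle u -> \prod_(z <- [:: a, b & u]) `|z| = 1.
Proof.
move=> /allP circle_u; rewrite !big_cons norm_a norm_b mulrA -rmorphM mulfV ?gt_eqF //.
by rewrite rmorph1 mul1r big_seq big1 // => z /circle_u /eqP.
Qed.

Lemma norm_coef_real_pair_le (v : seq R[i]) j :
    all on_circle v ->
  `|(prod_XsubC [:: a, b & v])`_j| <= ((1 + alpha) * (1 + alpha^-1) * 2 ^+ size v)%:C.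
Proof.
move=> circle_v; apply: le_trans (norm_coef_prod_XsubC_le _ _) _.
rewrite !big_cons mulrA prod_add1_norm_on_circle // norm_a norm_b.
by rewrite !(rmorphM, rmorphD, rmorphXn) rmorph1.
Qed.

Lemma perm_eq_real_pair (s : seq R[i]) :
    a \in s -> b \in s -> (count (predC on_circle) s <= 2)%N ->
  perm_eq s [:: a, b & filter on_circle s].
Proof.
move=> a_s b_s count_s; apply: (perm_eq_filter_exceptions (l := [:: a; b])) => //=.
- by rewrite inE real_pair_neq.
- by rewrite andbT real_pair_off_circle.
- by move=> z; rewrite !inE => /orP [] /eqP ->.
Qed.

Lemma roots_factor_split (s u tA tB : seq R[i]) :
    perm_eq s [:: a, b & u] -> all on_circle u ->
    perm_eq s (tA ++ tB) -> a \in tA -> \prod_(z <- tA) `|z| = 1 ->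
  perm_eq tA [:: a, b & filter on_circle tA] /\ all on_circle tB.
Proof.
move=> perm_s circle_u perm_AB a_tA prod_A.
have /andP [off_a off_b] := real_pair_off_circle.
have count_AB : (count (predC on_circle) tA + count (predC on_circle) tB = 2)%N.
  by rewrite -count_cat -(permP perm_AB) (permP perm_s) /= off_a off_b count_off_circle0.
have b_A : b \in tA.
  apply: contraT => b_nA.
  have b_B : b \in tB.
    have : b \in s by rewrite (perm_mem perm_s) !inE eqxx orbT.
    by rewrite (perm_mem perm_AB) mem_cat (negbTE b_nA).
  have : (0 < count (predC on_circle) tB)%N by rewrite -has_count; apply/hasP; exists b.
  move=> count_B; have count_A : (count (predC on_circle) tA <= 1)%N.
    by rewrite -ltnS -[2%N]count_AB -addn1 leq_add2l.
  have perm_A : perm_eq tA ([:: a] ++ filter on_circle tA).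
    apply: perm_eq_filter_exceptions => //=; first by rewrite off_a.
    by move=> z; rewrite inE => /eqP ->.
  move: prod_A; rewrite (perm_big _ perm_A) /= big_cons prod_norm_filter_on_circle.
  by rewrite mulr1 norm_a => /eqP; rewrite real_complex_eq1 gt_eqF.
have count_A : (count (predC on_circle) tA <= 2)%N by rewrite -[2%N]count_AB leq_addr.
have perm_A := perm_eq_real_pair a_tA b_A count_A.
split => //; apply/allP => z z_B; apply: contraT => off_z.
have : (0 < count (predC on_circle) tB)%N by rewrite -has_count; apply/hasP; exists z.
have : count (predC on_circle) tA = 2%N.
  by rewrite (permP perm_A) /= off_a off_b count_off_circle0 // filter_all.
by clear - count_AB; lia.
Qed.

End RealPair.

End UnitCircle.

Lemma monic_int_reducible (P : {poly int}) :
    P \is monic -> (1 < size P)%N ->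
    ~ irreducible_poly (map_poly (fun z : int => z%:~R) P : {poly rat}) ->
  exists A B : {poly int},
    [/\ A \is monic, B \is monic, (1 < size A)%N, (1 < size B)%N & P = A * B].
Proof.
move=> monP size_P; rewrite irreducible_rat_int => red_P.
have [q [size_q dvd_qP not_eqp]] :
    exists q : {poly int}, [/\ size q != 1%N, q %| P & ~~ (q %= P)].
  apply: boolp.contrapT => no_q; apply: red_P; split => // q size_q dvd_qP.
  by apply/negPn/negP => not_eqp; apply: no_q; exists q.
have [r eP] := dvdpP_int dvd_qP; set A := zprimitive q in eP.
have nz_P : P != 0 by apply: monic_neq0.
have nz_q : q != 0 by apply: contraNneq nz_P => q0; rewrite eP /A q0 zprimitive0 mul0r.
have nz_r : r != 0 by apply: contraNneq nz_P => r0; rewrite eP r0 mulr0.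
have size_A : (1 < size A)%N.
  by rewrite size_zprimitive ltn_neqAle eq_sym size_q lt0n size_poly_eq0.
have size_r : (1 < size r)%N.
  rewrite ltnNge; apply: contra not_eqp => size_r.
  have size_r1 : size r = 1%N by apply/eqP; rewrite eqn_leq size_r lt0n size_poly_eq0.
  by rewrite -dvdp_size_eqp // eP size_mul ?zprimitive_eq0 // size_zprimitive size_r1 addn1.
have lead_1 : lead_coef A * lead_coef r = 1 by rewrite -lead_coefM -eP (monicP monP).
have /orP [/eqP lead_A | /eqP lead_A] : (lead_coef A == 1) || (lead_coef A == -1).
  by apply: (@intUnitRing.unitzPl _ (lead_coef r)); rewrite mulrC.
- exists A, r; split; rewrite ?monicE ?lead_A //.
  by move: lead_1; rewrite lead_A mul1r => ->.
- exists (- A), (- r); split; rewrite ?monicE ?lead_coefN ?size_polyN ?mulrNN //.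
    by rewrite lead_A opprK.
  by move: lead_1; rewrite lead_A mulN1r => ->.
Qed.

Section IntegerFactors.
Variable R : realType.
Local Open Scope complex_scope.

Lemma coef_polyC_of (P : {poly int}) j : (polyC_of R P)`_j = (P`_j)%:~R.
Proof. exact: coef_map. Qed.

Lemma size_polyC_of (P : {poly int}) : size (polyC_of R P) = size P.
Proof. by rewrite size_map_inj_poly //; exact: intr_inj. Qed.

Lemma polyC_ofM (P Q : {poly int}) : polyC_of R (P * Q) = polyC_of R P * polyC_of R Q.
Proof. exact: rmorphM. Qed.

Lemma polyC_of_monic (P : {poly int}) : P \is monic -> polyC_of R P \is monic.
Proof. exact: monic_map. Qed.

Lemma conj_polyC_of (P : {poly int}) : map_poly conjc (polyC_of R P) = polyC_of R P.
Proof.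
apply/polyP => j; rewrite coef_map coef_polyC_of /=.
by rewrite -[(P`_j)%:~R](rmorph_int (real_complex R)) conjc_real.
Qed.

Lemma norm_coef_polyC_of (P : {poly int}) j : `|(polyC_of R P)`_j| = (`|P`_j|%:~R).
Proof. by rewrite coef_polyC_of intr_norm. Qed.

Lemma reciprocal_up_to_polyC_of (P : {poly int}) :
  reciprocal_up_to (polyC_of R P)`_0 (polyC_of R P) -> reciprocal_up_to P`_0 P.
Proof.
rewrite /reciprocal_up_to size_polyC_of => rec_P i le_i.
by apply: (@intr_inj R[i]); rewrite intrM -!coef_polyC_of rec_P.
Qed.

Lemma norm_coef0_factor_eq1 (A B : {poly int}) (s tA tB : seq R[i]) :
    polyC_of R A = prod_XsubC tA -> polyC_of R B = prod_XsubC tB ->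
    perm_eq s (tA ++ tB) -> \prod_(z <- s) `|z| = 1 ->
  `|A`_0| = 1.
Proof.
move=> eA eB perm_AB prod_s.
have : (`|A`_0| * `|B`_0|)%:~R = 1 :> R[i].
  rewrite intrM -!norm_coef_polyC_of eA eB !norm_coef0_prod_XsubC -big_cat.
  by rewrite -(perm_big _ perm_AB).
move/(@intr_inj R[i] _ 1)/eqP.
by rewrite -[`|B`_0|]abszE intUnitRing.mulzn_eq1 => /andP [/eqP].
Qed.

End IntegerFactors.

Lemma real_pair_weight_le (R : realFieldType) m k (alpha H : R) :
    1 < alpha <= H -> (k <= 2 * m)%N ->
  (1 + alpha) * (1 + alpha^-1) * 2 ^+ k <= 4 ^+ (m + 1) * H.
Proof.
move=> /andP [alpha_gt1 alpha_leH] le_k.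
have pair_le : (1 + alpha) * (1 + alpha^-1) <= 4 * H.
  have : alpha * alpha^-1 = 1 by rewrite mulfV ?gt_eqF // (lt_trans ltr01).
  have : alpha^-1 < 1 by rewrite invf_lt1 // (lt_trans ltr01).
  nra.
have -> : 4 ^+ (m + 1) * H = 4 * H * 4 ^+ m by rewrite exprD expr1; ring.
have -> : (4 : R) ^+ m = 2 ^+ (2 * m) by rewrite exprM -[2 ^+ 2]natrX.
by rewrite ler_pM ?mulr_ge0 ?addr_ge0 ?invr_ge0 ?exprn_ge0 ?ler_eXn2l ?ltr1n //; lra.
Qed.

Record bounded_factorization (R : realType) (m : nat) (H : R) (P Q G : {poly int}) : Prop := {
  bf_mul : P = Q * G;
  bf_size_Q : (size Q <= 2 * m + 2)%N;
  bf_size_G : (size G <= 2 * m + 2)%N;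
  bf_norm_Q0 : `|Q`_0| = 1;
  bf_reciprocal_Q : reciprocal_up_to Q`_0 Q;
  bf_coef_Q : forall j, (`|Q`_j|%:~R : R) <= 4 ^+ (m + 1) * H;
  bf_coef_G : forall j, `|G`_j| <= 2 ^+ (2 * m + 2) }.

Section Factorization.
Variable R : realType.
Local Open Scope complex_scope.
Local Notation on_circle := (fun z : R[i] => `|z| == 1).

Lemma bounded_factorization_of_roots m (H alpha : R) (A B : {poly int})
    (tA tB v : seq R[i]) :
    1 < alpha <= H -> (size A <= 2 * m + 2)%N -> (size B <= 2 * m + 2)%N ->
    polyC_of R A = prod_XsubC tA -> polyC_of R B = prod_XsubC tB ->
    perm_eq tA [:: alpha%:C, alpha^-1%:C & v] -> all on_circle v -> all on_circle tB ->
    `|A`_0| = 1 ->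
  bounded_factorization m H (A * B) A B.
Proof.
move=> alpha_bounds size_A size_B eA eB perm_A circle_v circle_B norm_A0.
have [alpha_gt1 _] := andP alpha_bounds.
have alpha_gt0 : 0 < alpha by lra.
have size_tA : size tA = (size A).-1 by rewrite -(size_polyC_of R) eA size_prod_XsubC.
have size_tB : size tB = (size B).-1 by rewrite -(size_polyC_of R) eB size_prod_XsubC.
have size_v : (size v <= 2 * m)%N.
  rewrite (perm_size perm_A) /= in size_tA.
  by rewrite -(leq_add2r 2) addn2 size_tA (leq_trans (leq_pred _) size_A).
have nz_A : all (fun z => z != 0) tA.
  apply/allP => z; rewrite (perm_mem perm_A) !inE => /orP [/eqP-> | /orP [/eqP-> | z_v]].
  - by rewrite (inj_eq (@complexI R)) gt_eqF.
  - by rewrite (inj_eq (@complexI R)) gt_eqF // invr_gt0.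
  - by rewrite -normr_eq0 (eqP (allP circle_v _ z_v)) oner_eq0.
have conj_A : perm_eq (map conjc tA) tA.
  by apply: perm_eq_conj_roots; rewrite -eA conj_polyC_of.
split => //.
- apply: (reciprocal_up_to_polyC_of (R := R)); rewrite eA.
  apply: reciprocal_prod_XsubC nz_A _.
  exact: perm_eq_inv_roots (lt0r_neq0 alpha_gt0) perm_A circle_v conj_A.
- move=> j; have := norm_coef_real_pair_le alpha_gt1 j circle_v.
  rewrite -(perm_big _ perm_A) -eA norm_coef_polyC_of.
  rewrite -(rmorph_int (real_complex R)) lecR.
  by move/le_trans; apply; apply: real_pair_weight_le.
- move=> j; have := norm_coef_on_circle_le j circle_B.
  rewrite -eB norm_coef_polyC_of size_tB -(ler_int R[i]) => /le_trans; apply.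
  by rewrite rmorphXn ler_eXn2l ?ltr1n // (leq_trans (leq_pred _) size_B).
Qed.

Lemma in_PRm_bounded_factorization m (H : R) (P : {poly int}) :
  in_PRm m H P -> exists Q G, bounded_factorization m H P Q G.
Proof.
move=> [[monP size_P _ [s [alpha [eP count_s a_s b_s alpha_bounds]]]] red_P].
have alpha_gt1 : 1 < alpha by case/andP: alpha_bounds.
have size_P1 : (1 < size P)%N by rewrite -subn_gt0 subn1 size_P muln_gt0 addn1.
have [A [B [monA monB gt1_A gt1_B eAB]]] := monic_int_reducible monP size_P1 red_P.
subst P; have nz_A := monic_neq0 monA; have nz_B := monic_neq0 monB.
rewrite size_mul // in size_P.
have [size_A size_B] : (size A <= 2 * m + 2)%N /\ (size B <= 2 * m + 2)%N.
  by move: size_P gt1_A gt1_B; set a := size A; set b := size B; clear; lia.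
have [tA [tB [perm_AB eA eB]]] : exists tA tB, [/\ perm_eq s (tA ++ tB),
    polyC_of R A = prod_XsubC tA & polyC_of R B = prod_XsubC tB].
  by apply: monic_factor_prod_XsubC (polyC_of_monic R monA) _; rewrite -polyC_ofM.
have size_s : size s = (2 * m + 2)%N.
  move: (size_polyC_of R (A * B)); rewrite eP size_prod_XsubC size_mul //.
  by clear - size_P; lia.
have count_s2 : (count (predC on_circle) s <= 2)%N.
  by move: (count_predC on_circle s); rewrite count_s size_s; clear; lia.
have perm_s := perm_eq_real_pair alpha_gt1 a_s b_s count_s2.
clear monP eP size_P size_P1 count_s count_s2 size_s red_P nz_A nz_B gt1_A gt1_B.
wlog a_tA : A B tA tB monA monB size_A size_B eA eB perm_AB / alpha%:C \in tA.
  move=> main; have : alpha%:C \in tA ++ tB by move: a_s; rewrite (perm_mem perm_AB).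
  rewrite mem_cat => /orP [a_tA | a_tB]; first exact: (main A B tA tB).
  rewrite [A * B]mulrC; apply: (main B A tB tA) => //.
  by rewrite perm_sym perm_catC perm_sym.
have norm_A0 : `|A`_0| = 1.
  apply: norm_coef0_factor_eq1 eA eB perm_AB _.
  by rewrite (perm_big _ perm_s) prod_norm_real_pair ?filter_all.
have prod_A : \prod_(z <- tA) `|z| = 1.
  by rewrite -norm_coef0_prod_XsubC -eA norm_coef_polyC_of norm_A0.
have [perm_A circle_B] :=
  roots_factor_split alpha_gt1 perm_s (filter_all _ _) perm_AB a_tA prod_A.
exists A, B; apply: bounded_factorization_of_roots alpha_bounds size_A size_B eA eB perm_A _
  circle_B norm_A0.
exact: filter_all.
Qed.

End Factorization.

Lemma uniq_leq_card_code (A : eqType) (T : finType) (code : A -> T -> Prop) (s : seq A) :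
    uniq s -> (forall a, a \in s -> exists c, code a c) ->
    (forall a b c, code a c -> code b c -> a = b) ->
  (size s <= #|T|)%N.
Proof.
case: s => [//|a0 s] uniq_s code_s code_inj.
have [c0 _] := code_s a0 (mem_head _ _).
have /boolp.choice [f f_code] : forall a, exists c, a \in a0 :: s -> code a c.
  move=> a; case: (boolP (a \in a0 :: s)) => [/code_s [c] | _]; last by exists c0.
  by exists c.
rewrite -(size_map f) cardE; apply: uniq_leq_size => [|c _]; last by rewrite mem_enum.
rewrite map_inj_in_uniq // => a b a_s b_s f_ab.
apply: (code_inj a b (f a)); first exact: f_code.
by rewrite f_ab; apply: f_code.
Qed.

Definition int_code (B : nat) (x : int) : 'I_(2 * B).+1 := inord (absz (x + B%:Z)).

Lemma int_code_inj B : {in [pred x : int | `|x| <= B%:Z] &, injective (int_code B)}.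
Proof. by move=> x y; rewrite !inE => x_le y_le /(congr1 val) /=; rewrite !inordK; lia. Qed.

Section Counting.
Variables (R : realType) (m : nat).

Let K := (2 ^ (2 * m + 2))%N.
Let N (H : R) := Num.Def.trunc (4 ^+ (m + 1) * H).
Let code_type (H : R) :=
  ({ffun 'I_(2 * m + 2) -> 'I_(2 * K).+1} * {ffun 'I_m -> 'I_(2 * N H).+1} * bool *
   'I_(2 * m + 2).+1)%type.

(* Only m coefficients of Q, each of size O(H), are recorded: by reciprocity Q is
   determined by its size, its constant term (a sign) and Q_1, ..., Q_m. *)
Definition factorization_code (H : R) (Q G : {poly int}) : code_type H :=
  ([ffun i : 'I_(2 * m + 2) => int_code K G`_i], [ffun i : 'I_m => int_code (N H) Q`_i.+1],
   Q`_0 == 1, inord (size Q)).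

Lemma norm_le_trunc (x : int) (X : R) :
  0 <= X -> (`|x|%:~R : R) <= X -> `|x| <= (Num.Def.trunc X)%:Z.
Proof. by move=> X_ge0 le_x; rewrite -abszE lez_nat truncn_ge_nat // -abszE. Qed.

Lemma factorization_code_inj (H : R) P1 P2 Q1 Q2 G1 G2 :
    0 <= H -> bounded_factorization m H P1 Q1 G1 -> bounded_factorization m H P2 Q2 G2 ->
    factorization_code H Q1 G1 = factorization_code H Q2 G2 ->
  P1 = P2.
Proof.
move=> H_ge0 [-> sQ1 sG1 nQ1 rQ1 cQ1 cG1] [-> sQ2 sG2 nQ2 rQ2 cQ2 cG2].
case=> /ffunP eG /ffunP eQ e0 eS.
have X_ge0 : (0 : R) <= 4 ^+ (m + 1) * H by rewrite mulr_ge0 ?exprn_ge0.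
have nG (G : {poly int}) :
    (forall j, `|G`_j| <= 2 ^+ (2 * m + 2)) -> forall j, `|G`_j| <= K%:Z.
  by move=> cG j; rewrite /K -natz natrX cG.
have -> : G1 = G2.
  apply/polyP => j; have [lt_j | le_j] := ltnP j (2 * m + 2).
    apply: (int_code_inj (nG _ cG1 j) (nG _ cG2 j)).
    by move: (eG (Ordinal lt_j)); rewrite !ffunE.
  by rewrite !nth_default // (leq_trans _ le_j).
have sign (x : int) : `|x| = 1 -> x = if x == 1 then 1 else -1 by case: eqP => //; lia.
have eQ0 : Q1`_0 = Q2`_0 by rewrite (sign _ nQ1) (sign _ nQ2) e0.
have size_Q : size Q1 = size Q2 by move/(congr1 val): eS => /=; rewrite !inordK // ltnS.
congr (_ * _); apply: (reciprocal_up_to_eq size_Q sQ1 rQ1 _) => [|[|j] le_jm] //.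
  by rewrite eQ0.
apply: (int_code_inj (norm_le_trunc X_ge0 (cQ1 _)) (norm_le_trunc X_ge0 (cQ2 _))).
by move: (eQ (Ordinal le_jm)); rewrite !ffunE.
Qed.

Lemma count_bounded_factorizations : exists C2 : R, 0 < C2 /\
  forall H : R, 1 < H -> forall s : seq {poly int}, uniq s ->
    (forall P, P \in s -> exists Q G, bounded_factorization m H P Q G) ->
    (size s)%:R <= C2 * H ^+ m.
Proof.
pose C := ((2 * K).+1 ^ (2 * m + 2) * 2 * (2 * m + 2).+1)%N.
exists (C%:R * (3 * 4 ^+ (m + 1)) ^+ m); split.
  by rewrite mulr_gt0 ?ltr0n ?muln_gt0 ?expn_gt0 // exprn_gt0 // mulr_gt0 // exprn_gt0.
move=> H H_gt1 s uniq_s bf_s.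
have size_s : (size s <= #|{: code_type H}|)%N.
  pose code P c := exists Q G, bounded_factorization m H P Q G /\ c = factorization_code H Q G.
  apply: (uniq_leq_card_code (code := code)) => //.
    by move=> P /bf_s [Q [G bf]]; exists (factorization_code H Q G), Q, G.
  move=> P1 P2 c [Q1 [G1 [bf1 ->]]] [Q2 [G2 [bf2 e]]].
  exact: factorization_code_inj (ltW (lt_trans ltr01 H_gt1)) bf1 bf2 e.
apply: le_trans (_ : #|{: code_type H}|%:R <= _); first by rewrite ler_nat.
have H_ge0 : 0 <= H by lra.
have X_ge1 : 1 <= 4 ^+ (m + 1) * H.
  by rewrite -[1]mulr1 ler_pM ?exprn_ege1 ?ltW //; lra.
have N_le : (N H)%:R <= 4 ^+ (m + 1) * H by rewrite truncn_le; lra.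
rewrite !card_prod !card_ffun !card_ord card_bool (mulnAC _ (_ ^ m)%N) (mulnAC _ (_ ^ m)%N).
rewrite natrM natrX -mulrA -exprMn ler_wpM2l // lerXn2r ?nnegrE ?mulr_ge0 ?exprn_ge0 //.
by rewrite -addn1 natrD natrM -mulrA; lra.
Qed.

End Counting.

Unset Implicit Arguments.

Theorem lemma4 (R : realType) (m : nat) (hm : (1 <= m)%N) :
  exists C2 : R, 0 < C2 /\
    forall (H : R), 1 < H ->
      forall s : seq {poly int}, uniq s -> (forall P, P \in s -> in_PRm m H P) ->
        (size s)%:R <= C2 * H ^+ m.
Proof.
have [C2 [C2_gt0 count_s]] := count_bounded_factorizations R m.
exists C2; split => // H H_gt1 s uniq_s PR_s.
by apply: count_s => // P /PR_s /in_PRm_bounded_factorization.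
Qed.
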